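(* Let $r\ge 3$, $1\le t\le r-2$ and $n\ge 2$ be integers, and let $|X_\ell|=n$ for all $1\le\ell\le r$. Let $\mathcal F\subseteq X_1\times\dots\times X_r$ be a non-trivial $t$-intersecting family such that for every $1\le\ell\le r$, $\mathcal F$ is either $\ell$-shifted or $\ell$-shift-resistant, and such that $\mathcal F$ is not coordinate-wise shifted. Then $$|\mathcal F|\le (t+2)n^{r-t-1}-(t+1)n^{r-t-2}.$$
   Context: Let $X_\ell=[n_\ell]$ for $1\le \ell\le r$. For $A,B\in X_1\times\dots\times X_r$, write $A\cap B=\{\ell:A[\ell]=B[\ell]\}$ ($A[\ell]$ the $\ell$-th coordinate). $\mathcal F$ is $t$-intersecting if $|A\cap B|\ge t$ for all $A,B\in\mathcal F$; $\bigcap\mathcal F$ is the set of coordinates on which all members of $\mathcal F$ agree; a $t$-intersecting $\mathcal F$ is non-trivial if $|\bigcap\mathcal F|<t$. For $1\le\ell\le r$ and $1<j\le n_\ell$, the shift $S^{(\ell)}_j$ acts on $F\in\mathcal F$ by: if $F[\ell]=j$ and the sequence $F'$ obtained from $F$ by replacing its $\ell$-th coordinate by $1$ is not in $\mathcal F$, then $S^{(\ell)}_j(F)=F'$; otherwise $S^{(\ell)}_j(F)=F$; $S^{(\ell)}_j(\mathcal F)=\{S^{(\ell)}_j(F):F\in\mathcal F\}$. $\mathcal F$ is $\ell$-shifted if $S^{(\ell)}_j(\mathcal F)=\mathcal F$ for all $1<j\le n_\ell$, and coordinate-wise shifted if it is $\ell$-shifted for every $\ell$. A non-trivial $t$-intersecting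 family $\mathcal F$ is $\ell$-shift-resistant if there exists $x\in X_\ell\setminus\{1\}$ such that $|\bigcap S^{(\ell)}_x(\mathcal F)|=t$. *)

(* X_l = [n] is modelled by 'I_n, the paper's value j being
   the ordinal j-1; so the paper's distinguished value 1 is the ordinal 0. *)
From mathcomp Require Import all_boot all_order.
Set Implicit Arguments. Unset Strict Implicit. Unset Printing Implicit Defensive.

Section Defs.
Variables (r n : nat).
Notation seqT := {ffun 'I_r -> 'I_n}.

Definition agree (A B : seqT) : {set 'I_r} := [set l | A l == B l].

Definition t_intersecting (t : nat) (F : {set seqT}) : Prop :=
  forall A B, A \in F -> B \in F -> t <= #|agree A B|.

Definition common (F : {set seqT}) : {set 'I_r} :=
  [set l | [forall A in F, forall B in F, A l == B l]].

Definition nontrivial_t_intersecting (t : nat) (F : {set seqT}) : Prop :=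
  t_intersecting t F /\ #|common F| < t.

(* replace the l-th coordinate by the paper's value 1 (ordinal 0) *)
Definition reset1 (l : 'I_r) (A : seqT) : seqT :=
  [ffun k => if k == l then insubd (A l) 0 else A k].

Definition shift_elem (l : 'I_r) (j : 'I_n) (F : {set seqT}) (A : seqT) : seqT :=
  if (A l == j) && (reset1 l A \notin F) then reset1 l A else A.

Definition shift (l : 'I_r) (j : 'I_n) (F : {set seqT}) : {set seqT} :=
  [set shift_elem l j F A | A in F].

(* j ranges over paper values 1 < j <= n, i.e. ordinals with value <> 0 *)
Definition l_shifted (l : 'I_r) (F : {set seqT}) : Prop :=
  forall j : 'I_n, (0 < val j)%N -> shift l j F = F.

Definition coord_shifted (F : {set seqT}) : Prop :=
  forall l : 'I_r, l_shifted l F.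

Definition shift_resistant (t : nat) (l : 'I_r) (F : {set seqT}) : Prop :=
  nontrivial_t_intersecting t F /\
  exists x : 'I_n, (0 < val x)%N /\ #|common (shift l x F)| = t.
End Defs.

From mathcomp Require Import all_boot all_order.
From Stdlib Require Import Classical.
From mathcomp Require Import zify.
Set Implicit Arguments. Unset Strict Implicit. Unset Printing Implicit Defensive.

(* Take a coordinate l at which F is not shifted and a value x with
   |S| = t for S = ⋂ S^(l)_x(F).  As |⋂F| < t, we get l ∈ S \ ⋂F and
   S \ {l} ⊆ ⋂F; hence every member has l-th value 1 or x, the latter only
   when its l-reset is missing from F, and members of F are determined by
   their coordinates outside S.  If some k ∉ S is not shifted either, the same
   dichotomy makes coordinate k two-valued, so |F| ≤ 2 n^(r-t-1), which is
   below the bound.  Otherwise F is shifted at every coordinate outside S;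
   resetting those coordinates in members with l-th values x and 1 yields a
   member with value x whose l-reset lies in F, a contradiction. *)

Section Shifts.
Variables (r n : nat).
Local Notation seqT := {ffun 'I_r -> 'I_n}.
Implicit Types (F : {set seqT}) (A B C D : seqT) (l i k : 'I_r) (x y : 'I_n).
Implicit Types (s : seq 'I_r) (T : {set 'I_r}).

Lemma val_insubd0 (u : 'I_n) : val (insubd u 0 : 'I_n) = 0.
Proof. by rewrite val_insubd (leq_ltn_trans (leq0n u) (ltn_ord u)). Qed.

Lemma val_reset1 l A i : val (reset1 l A i) = if i == l then 0 else val (A i).
Proof. by rewrite ffunE; case: eqP => // _; rewrite val_insubd0. Qed.

Definition resets s A : seqT := foldr (@reset1 r n) A s.

Lemma val_resets s A i : val (resets s A i) = if i \in s then 0 else val (A i).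
Proof.
by elim: s => [|l s IHs] //=; rewrite val_reset1 inE IHs; case: eqP.
Qed.

Lemma reset1_eq l A B :
  (forall i, i != l -> A i = B i) -> val (B l) = 0 -> reset1 l A = B.
Proof.
move=> eqAB Bl0; apply/ffunP => i; apply/val_inj; rewrite val_reset1.
by case: eqVneq => [-> | /eqAB ->].
Qed.

Lemma reset1_id l A : val (A l) = 0 -> reset1 l A = A.
Proof. exact: reset1_eq. Qed.

Lemma mem_shift F l x A : A \in F -> shift_elem l x F A \in shift l x F.
Proof. exact: imset_f. Qed.

Lemma mem_reset1_shifted F l A : l_shifted l F -> A \in F -> reset1 l A \in F.
Proof.
move=> shF FA; have [/reset1_id -> // | Al_gt0] := posnP (A l).
apply/negPn/negP => FNA.
have := mem_shift l (A l) FA.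
by rewrite shF // /shift_elem eqxx FNA /= (negbTE FNA).
Qed.

Lemma mem_resets_shifted F s A :
  {in s, forall l, l_shifted l F} -> A \in F -> resets s A \in F.
Proof.
move=> shF FA; elim: s shF => [|l s IHs] //= shF.
apply: mem_reset1_shifted; first by apply: shF; rewrite mem_head.
by apply: IHs => k sk; apply: shF; rewrite inE sk orbT.
Qed.

Lemma commonP F i : reflect {in F &, forall A B, A i = B i} (i \in common F).
Proof.
rewrite inE; apply: (iffP forall_inP) => [agF A B FA FB | agF A FA].
  by apply/eqP; move/forall_inP: (agF A FA); apply.
by apply/forall_inP => B FB; rewrite (agF A B).
Qed.

Lemma shift_elem_neq F l x A i : i != l -> shift_elem l x F A i = A i.
Proof. by rewrite /shift_elem; case: ifP => // _ /negbTE il; rewrite ffunE il. Qed.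

Lemma val_shift_elem F l x A : val (shift_elem l x F A l) =
  if (A l == x) && (reset1 l A \notin F) then 0 else val (A l).
Proof. by rewrite /shift_elem; case: ifP => // _; rewrite val_reset1 eqxx. Qed.

Lemma common_shift_neq F l x i :
  i \in common (shift l x F) -> i != l -> i \in common F.
Proof.
move=> /commonP agS il; apply/commonP => A B FA FB.
rewrite -(shift_elem_neq F x A il) -(shift_elem_neq F x B il).
by apply: agS; apply: mem_shift.
Qed.

Lemma common_shift_gt F l x :
  #|common F| < #|common (shift l x F)| ->
  l \in common (shift l x F) /\ l \notin common F.
Proof.
move=> ltFS; suff : (l \in common (shift l x F)) && (l \notin common F) by case/andP.
apply: contraTT ltFS; rewrite negb_and negbK -leqNgt => lS_or_lF.
apply: subset_leq_card; apply/subsetP => i iS.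
have [il | ] := eqVneq i l; last exact: common_shift_neq iS.
by rewrite il in iS *; case/orP: lS_or_lF => // /negP[].
Qed.

Section ResistantCoordinate.
Variables (F : {set seqT}) (l : 'I_r) (x : 'I_n).
Hypotheses (lS : l \in common (shift l x F)) (lF : l \notin common F).

(* All shifted members share one value at [l]; it cannot be a nonzero value,
   for then no member would move and [F] itself would agree at [l]. *)
Lemma resistant_coord_values C : C \in F ->
  val (C l) = 0 \/ C l = x /\ reset1 l C \notin F.
Proof.
move=> FC; suff : val (shift_elem l x F C l) = 0.
  by rewrite val_shift_elem; case: ifP => [/andP[/eqP-> ->] _ | _ ->]; [right | left].
apply/eqP/negPn/negP => SC_neq0; case/negP: lF; apply/commonP => A B FA FB.
suff fixed D : D \in F -> D l = shift_elem l x F C l by rewrite !fixed.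
move=> FD; have SD : shift_elem l x F D l = shift_elem l x F C l.
  by apply: (commonP _ _ lS); apply: mem_shift.
move: SC_neq0; rewrite -SD /shift_elem.
by case: ifP => // _; rewrite val_reset1 eqxx.
Qed.

Lemma resistant_coord_determined C D : C \in F -> D \in F ->
  (forall i, i \notin common (shift l x F) -> C i = D i) -> C = D.
Proof.
move=> FC FD eqCD_offS.
have eqCD i : i != l -> C i = D i.
  move=> il; have [iS | /eqCD_offS //] := boolP (i \in common (shift l x F)).
  exact: commonP (common_shift_neq iS il) C D FC FD.
apply/ffunP => i; have [-> | /eqCD //] := eqVneq i l.
case: (resistant_coord_values FC) => [C0 | [Cx FNC]];
  case: (resistant_coord_values FD) => [D0 | [Dx FND]].
- by apply: val_inj; rewrite C0 D0.
- by rewrite (reset1_eq (fun j jl => esym (eqCD j jl)) C0) FC in FND.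
- by rewrite (reset1_eq eqCD D0) FD in FNC.
- by rewrite Cx Dx.
Qed.

Lemma resistant_coord_witnesses :
  exists A B, [/\ A \in F, B \in F, A l = x & val (B l) = 0].
Proof.
have [A FA [B FB neqAB]] : exists2 A, A \in F & exists2 B, B \in F & A l != B l.
  apply: NNPP => noAB; case/commonP: lF => A B FA FB.
  by apply/eqP/negPn/negP => neqAB; apply: noAB; exists A => //; exists B.
case: (resistant_coord_values FA) => [A0 | [Ax _]];
  case: (resistant_coord_values FB) => [B0 | [Bx _]].
- by case/eqP: neqAB; apply: val_inj; rewrite A0 B0.
- by exists B, A.
- by exists A, B.
- by case/eqP: neqAB; rewrite Ax Bx.
Qed.

Lemma resistant_coord_not_shifted_off_common : 0 < x ->
  ~ {in ~: common (shift l x F), forall k, l_shifted k F}.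
Proof.
move=> x_gt0 shF; set s := enum (~: common (shift l x F)).
have shs : {in s, forall k, l_shifted k F} by move=> k; rewrite mem_enum; apply: shF.
have [A [B [FA FB Ax B0]]] := resistant_coord_witnesses.
have FA' := mem_resets_shifted shs FA; have FB' := mem_resets_shifted shs FB.
have ls : l \notin s by rewrite mem_enum inE negbK.
have A'x : resets s A l = x by apply/val_inj; rewrite val_resets (negbTE ls) Ax.
case: (resistant_coord_values FA') => [| [_]]; first by rewrite A'x => x0; rewrite x0 in x_gt0.
suff -> : reset1 l (resets s A) = resets s B by rewrite FB'.
apply: reset1_eq => [i il | ]; last by rewrite val_resets (negbTE ls).
apply/val_inj; rewrite !val_resets mem_enum inE; case: ifPn => // /negPn iS.
by rewrite (commonP _ _ (common_shift_neq iS il) A B FA FB).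
Qed.
End ResistantCoordinate.

Lemma prod_free_coords T k : k \notin T ->
  \prod_(i : 'I_r) (if i \in T then 1 else if i == k then 2 else n) =
  2 * n ^ (r - #|T| - 1).
Proof.
move=> kT; rewrite (bigID (mem T)) /= big1 ?mul1n; last by move=> i ->.
rewrite (bigD1 k) //= (negbTE kT) eqxx (eq_bigr (fun=> n)); last first.
  by move=> i /andP[/negbTE -> /negbTE ->].
rewrite prod_nat_const; congr (2 * n ^ _).
have -> : r - #|T| - 1 = #|[predD1 ~: T & k]|.
  have := cardsC T; have := cardD1 k (~: T); rewrite inE kT card_ord add1n.
  by move: (#|~: T|) (#|[predD1 ~: T & k]|) => a b; lia.
by apply: eq_card => i; rewrite !inE andbC.
Qed.

Lemma card_le_two_valued_coord T k y F :
  {in F &, forall C D : seqT, (forall i, i \notin T -> C i = D i) -> C = D} ->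
  k \notin T -> {in F, forall C : seqT, val (C k) = 0 \/ C k = y} ->
  #|F| <= 2 * n ^ (r - #|T| - 1).
Proof.
move=> detF kT Fk; pose z : 'I_n := Ordinal (leq_ltn_trans (leq0n y) (ltn_ord y)).
pose P i : pred 'I_n := if i \in T then pred1 z else if i == k then pred2 z y else predT.
have inj : {in F &, injective (resets (enum T))}.
  move=> C D FC FD eqCD; apply: detF => // i iT; apply: val_inj.
  by have := congr1 (fun E : seqT => val (E i)) eqCD; rewrite /= !val_resets mem_enum (negbTE iT).
have sub : resets (enum T) @: F \subset family P.
  apply/subsetP => _ /imsetP[C FC ->]; apply/familyP => i.
  rewrite /P; case: ifP => iT; first by rewrite inE; apply/eqP/val_inj; rewrite val_resets mem_enum iT.
  case: eqP => [-> | //]; rewrite inE.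
  have -> : resets (enum T) C k = C k.
    by apply/val_inj; rewrite val_resets mem_enum (negbTE kT).
  case: (Fk C FC) => [Ck0 | ->]; last by rewrite eqxx orbT.
  by apply/orP; left; apply/eqP/val_inj.
rewrite -(card_in_imset inj) -(prod_free_coords kT).
apply: leq_trans (subset_leq_card sub) _; rewrite card_family foldrE big_image /=.
apply: leq_prod => i _; rewrite /P; case: ifP => _; first by rewrite card1.
by case: ifP => _; rewrite ?card2 ?cardT ?size_enum_ord //; case: (z != y).
Qed.
End Shifts.

Lemma two_pow_le_bound t n m : 1 <= t -> 2 <= n ->
  2 * n ^ m.+1 <= (t + 2) * n ^ m.+1 - (t + 1) * n ^ m.
Proof. by move=> t1 n2; rewrite expnS; nia. Qed.

Theorem lemma2p3 (r t n : nat) (F : {set {ffun 'I_r -> 'I_n}}) :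
  3 <= r -> 1 <= t -> t <= r - 2 -> 2 <= n ->
  nontrivial_t_intersecting t F ->
  (forall l : 'I_r, l_shifted l F \/ shift_resistant t l F) ->
  ~ coord_shifted F ->
  #|F| <= (t + 2) * n ^ (r - t - 1) - (t + 1) * n ^ (r - t - 2).
Proof.
move=> _ t1 tr n2 [_ ltFt] shF notshF.
apply: (@leq_trans (2 * n ^ (r - t - 1))); last first.
  by rewrite (_ : r - t - 1 = (r - t - 2).+1) ?two_pow_le_bound //; lia.
have resistant l : ~ l_shifted l F ->
    exists2 x : 'I_n, 0 < x & [/\ #|common (shift l x F)| = t,
      l \in common (shift l x F) & l \notin common F].
  case: (shF l) => // [[_ [x [x_gt0 cardS]]]] _; exists x => //.
  by have [] : l \in common (shift l x F) /\ l \notin common F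
    by apply: common_shift_gt; rewrite cardS.
have [l /resistant[x x_gt0 [cardS lS lF]]] := not_all_ex_not _ _ notshF.
set S := common (shift l x F) in cardS lS lF *.
case: (classic (exists2 k, k \in ~: S & ~ l_shifted k F)) => [[k kS] | allS].
  move=> /resistant[y _ [_ kSk kF]]; rewrite -cardS.
  apply: (card_le_two_valued_coord (k := k) (y := y)).
  - exact: resistant_coord_determined.
  - by rewrite inE in kS.
  - by move=> C /(resistant_coord_values kSk kF) [-> | [-> _]]; [left | right].
case: (resistant_coord_not_shifted_off_common lS lF x_gt0) => k kS.
by apply: NNPP => notshk; apply: allS; exists k.
Qed.
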